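(* Assume that $0<h<1$, that $2/h$ is not an integer, and that $$\lim_{\beta\to\infty}|\Lambda_{L_\beta}|^{1/2}\big\{e^{-[(n_0+1)h-2]\beta}+e^{-h\beta}\big\}=0\quad\text{and}\quad\lim_{\beta\to\infty}|\Lambda_{L_\beta}|^{2}e^{-(2-h)\beta}=0.$$ Then $$\lim_{\beta\to\infty}\frac{\mathrm{cap}(\mathbf{-1},\mathbf{+1})}{\mathrm{cap}(\mathbf{-1},\{\mathbf 0,\mathbf{+1}\})}=1.$$
   Context: Blume–Capel model. Fix $h\in(0,2)$, $n_0=\lfloor 2/h\rfloor$. For each $\beta>0$, $L=L_\beta$ is a positive integer (with $L_\beta\ge n_0(n_0+1)+2$), $\Lambda_L$ the two-dimensional discrete torus of side $L$, $\Omega_L=\{-1,0,1\}^{\Lambda_L}$. Hamiltonian $\mathbb H(\sigma)=\sum(\sigma(y)-\sigma(x))^2-h\sum_x\sigma(x)$, first sum over unordered nearest-neighbour pairs. $\sigma^{x,\pm}$: replace $\sigma(x)$ by $\sigma(x)\pm1$ modulo $3$ in $\{-1,0,1\}$. $(\sigma_t)$ jumps from $\sigma$ to $\sigma^{x,\pm}$ at rate $R_\beta(\sigma,\sigma^{x,\pm})=\exp\{-\beta[\mathbb H(\sigma^{x,\pm})-\mathbb H(\sigma)]_+\}$; $\mathbb P_\sigma$ its law. $\mu_\beta(\sigma)=Z_\beta^{-1}e^{-\beta\mathbb H(\sigma)}$, $\lambda_\beta(\sigma)=\sum_{\sigma'}R_\beta(\sigma,\sigma')$, $H_A=\inf\{t>0:\sigma_t\in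 A\}$, $H_A^+=\inf\{t>T_1:\sigma_t\in A\}$ ($T_1$ first jump time). For disjoint $A,B$, $\mathrm{cap}(A,B)=\sum_{\sigma\in A}\mu_\beta(\sigma)\lambda_\beta(\sigma)\mathbb P_\sigma[H_B<H_A^+]$ (a single configuration stands for the singleton). $\mathbf{-1},\mathbf 0,\mathbf{+1}$ are the constant configurations. *)

From Stdlib Require Import Reals Classical ClassicalEpsilon.
From mathcomp Require Import all_boot.
Set Implicit Arguments. Unset Strict Implicit. Unset Printing Implicit Defensive.

Open Scope R_scope.

Notation "\rsum_ ( i : T ) F" := (\big[Rplus/R0]_(i : T) F)
  (at level 41, F at level 41, i, T at level 50) : R_scope.
Notation "\rsum_ ( i | P ) F" := (\big[Rplus/R0]_(i | P) F)
  (at level 41, F at level 41, i at level 50) : R_scope.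

(* limit of a real sequence (0 if it does not converge) *)
Definition lim_seq (u : nat -> R) : R :=
  match excluded_middle_informative (exists l, Un_cv u l) with
  | left H => proj1_sig (constructive_indefinite_description _ H)
  | right _ => 0
  end.

Definition lim_infty (f : R -> R) (l : R) : Prop :=
  forall eps, 0 < eps -> exists M, forall b, M < b -> Rabs (f b - l) < eps.

(* spins {-1,0,1} encoded by 'I_3 : value i - 1 *)
Definition spin (i : 'I_3) : R := INR (nat_of_ord i) - 1.
Definition s_minus : 'I_3 := @Ordinal 3 0 isT.
Definition s_zero  : 'I_3 := @Ordinal 3 1 isT.
Definition s_plus  : 'I_3 := @Ordinal 3 2 isT.

(* torus Lambda_L = (Z/LZ)^2, configurations Omega_L *)
Definition site (L : nat) := ('I_L * 'I_L)%type.
Definition conf (L : nat) := {ffun site L -> 'I_3}.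

Definition right_nb L (x : site L) : site L := (ordS x.1, x.2).
Definition up_nb L (x : site L) : site L := (x.1, ordS x.2).

Definition const_conf L (c : 'I_3) : conf L := [ffun _ => c].
Definition minus_conf L := const_conf L s_minus.
Definition zero_conf L := const_conf L s_zero.
Definition plus_conf L := const_conf L s_plus.

(* Hamiltonian: each unordered nearest-neighbour pair {x, x+e_i} counted once
   (valid since L >= 3) *)
Definition Ham (h : R) L (s : conf L) : R :=
  \rsum_(x : site L)
     ((spin (s (right_nb x)) - spin (s x))^2 + (spin (s (up_nb x)) - spin (s x))^2)
  - h * \rsum_(x : site L) spin (s x).

Definition flip L (s : conf L) (x : site L) (pl : bool) : conf L :=
  [ffun y => if y == x then (if pl then ordS (s x) else ord_pred (s x)) else s y].

Definition rate (h beta : R) L (s s' : conf L) : R :=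
  exp (- beta * Rmax 0 (Ham h s' - Ham h s)).

Definition lam (h beta : R) L (s : conf L) : R :=
  \rsum_(x : site L) (rate h beta s (flip s x true) + rate h beta s (flip s x false)).

Definition Zpart (h beta : R) L : R := \rsum_(s : conf L) exp (- beta * Ham h s).
Definition mu (h beta : R) L (s : conf L) : R := exp (- beta * Ham h s) / Zpart h beta L.

(* expectation of g(next state) for the embedded jump chain started at s *)
Definition jump_avg (h beta : R) L (s : conf L) (g : conf L -> R) : R :=
  \rsum_(x : site L)
    (rate h beta s (flip s x true) / lam h beta s * g (flip s x true)
     + rate h beta s (flip s x false) / lam h beta s * g (flip s x false)).

(* reach h beta A B n eta = probability, for the jump chain started at eta,
   that B is visited before A within the first n visited states
   (eta itself counted as the first visited state) *)
Fixpoint reach (h beta : R) L (A B : pred (conf L)) (n : nat) (eta : conf L) : R :=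
  match n with
  | O => 0
  | S n' => if B eta then 1 else if A eta then 0
            else jump_avg h beta eta (reach h beta A B n')
  end.

(* P_sigma[H_B < H_A^+] : after the first jump, B is hit before A *)
Definition escape (h beta : R) L (A B : pred (conf L)) (s : conf L) : R :=
  lim_seq (fun n => jump_avg h beta s (reach h beta A B n)).

Definition cap (h beta : R) L (A B : pred (conf L)) : R :=
  \rsum_(s | A s) (mu h beta s * lam h beta s * escape h beta A B s).

(** Both capacities are [mu(-1) lam(-1)] times an escape
    probability from [-1], so the ratio is the conditional probability that
    the chain, once it reaches {0,+1}, goes on to +1 before returning to -1.
    Entering at 0, it can only fail by climbing from 0 above the energy level
    [c = (h N + 4 L) / 2] before reaching +1 ([N = L^2]), because [H(-1) = h N > c].
    The probability [phi] of that climb is an equilibrium potential, bounded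
    through its Dirichlet form: the form is at most the flux out of {H > c},
    of order [N 3^N exp(-beta c)], and at least [phi(0)^2 N^-2 exp(-4 L beta)]
    along the path from 0 to +1 filling the torus row by row, whose energies
    stay below [4 L].  Since [L >= n0 (n0 + 1) + 2] gives [c - 4 L >= delta N / 2]
    with [delta > 0] independent of [L], the entropy [3^N] is beaten and
    [phi(0) <= 10 exp(-delta beta / 4)] uniformly in [L]. *)

From Stdlib Require Import Reals Lra ClassicalEpsilon.
From mathcomp Require Import all_boot zify.
From HB Require Import structures.
Open Scope R_scope.
Set Implicit Arguments. Unset Strict Implicit. Unset Printing Implicit Defensive.

Lemma Rplus_associative : associative Rplus.
Proof. by move=> a b c; rewrite Rplus_assoc. Qed.

HB.instance Definition _ :=
  Monoid.isComLaw.Build R R0 Rplus Rplus_associative Rplus_comm Rplus_0_l.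

Lemma Un_cv_const c : Un_cv (fun _ => c) c.
Proof. by move=> e e0; exists 0%nat => n _; rewrite /R_dist Rminus_diag Rabs_R0. Qed.

Lemma Un_cv_succ u l : Un_cv u l -> Un_cv (fun n => u n.+1) l.
Proof. by move=> ul e e0; have [N uN] := ul e e0; exists N => n nN; apply: uN; lia. Qed.

Section RealSums.
Variables (I : Type) (r : seq I) (P : pred I).

Lemma rsum_le (F G : I -> R) :
  (forall i, P i -> F i <= G i) ->
  \big[Rplus/R0]_(i <- r | P i) F i <= \big[Rplus/R0]_(i <- r | P i) G i.
Proof. by apply: big_ind2 => *; lra. Qed.

Lemma rsum_ge0 (F : I -> R) :
  (forall i, P i -> 0 <= F i) -> 0 <= \big[Rplus/R0]_(i <- r | P i) F i.
Proof. by apply: big_ind => *; lra. Qed.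

Lemma rsum_plus (F G : I -> R) :
  \big[Rplus/R0]_(i <- r | P i) (F i + G i) =
  \big[Rplus/R0]_(i <- r | P i) F i + \big[Rplus/R0]_(i <- r | P i) G i.
Proof. exact: big_split. Qed.

Lemma rsum_scal (c : R) (F : I -> R) :
  \big[Rplus/R0]_(i <- r | P i) (c * F i) = c * \big[Rplus/R0]_(i <- r | P i) F i.
Proof.
by rewrite (big_endo (Rmult c)) // => [x y|]; [rewrite Rmult_plus_distr_l | rewrite Rmult_0_r].
Qed.

Lemma rsum_cv (F : I -> nat -> R) (l : I -> R) :
  (forall i, Un_cv (F i) (l i)) ->
  Un_cv (fun n => \big[Rplus/R0]_(i <- r | P i) F i n) (\big[Rplus/R0]_(i <- r | P i) l i).
Proof.
move=> Fl; elim: r => [|i s IH].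
  by rewrite big_nil; apply: Un_cv_ext (Un_cv_const 0) => n; rewrite big_nil.
apply: Un_cv_ext => [n|]; first by rewrite big_cons; reflexivity.
rewrite big_cons; case: (P i); last exact: IH.
exact: CV_plus.
Qed.

End RealSums.

Lemma big_Rmin_le (I : eqType) (r : seq I) (F : I -> R) (j : I) :
  j \in r -> \big[Rmin/1]_(i <- r) F i <= F j.
Proof.
elim: r => [//|i r IH]; rewrite in_cons big_cons => /orP [/eqP <-|jr].
  exact: Rmin_l.
exact: Rle_trans (Rmin_r _ _) (IH jr).
Qed.

Lemma rsum_ge_term (I : finType) (F : I -> R) (j : I) :
  (forall i, 0 <= F i) -> F j <= \rsum_(i : I) F i.
Proof.
move=> F0; rewrite (bigD1 j) //=.
have : 0 <= \big[Rplus/R0]_(i | i != j) F i by apply: rsum_ge0.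
lra.
Qed.

Lemma rsum_const (I : finType) (c : R) : \rsum_(i : I) c = INR #|I| * c.
Proof.
rewrite big_const; elim: #|I| => [|n IH]; first by rewrite /= Rmult_0_l.
by rewrite S_INR /= IH; lra.
Qed.

Lemma exp_monotone x y : x <= y -> exp x <= exp y.
Proof. by case/Rle_lt_or_eq_dec => [/exp_increasing/Rlt_le|->] //; lra. Qed.

Lemma exp_INR_mult n x : exp (INR n * x) = exp x ^ n.
Proof.
elim: n => [|n IH]; first by rewrite Rmult_0_l exp_0.
by rewrite S_INR Rmult_plus_distr_r Rmult_1_l exp_plus IH /=; lra.
Qed.

Lemma lim_seq_unique u l : Un_cv u l -> lim_seq u = l.
Proof.
move=> ul; rewrite /lim_seq; case: excluded_middle_informative => [E|N].
  by case: (constructive_indefinite_description _ E) => l' /= /UL_sequence; apply.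
by case: N; exists l.
Qed.

Lemma lim_seq_growing u K :
  Un_growing u -> (forall n, u n <= K) -> Un_cv u (lim_seq u).
Proof.
move=> gu uK; have ub : has_ub u by exists K => _ [n ->]; exact: uK.
have [l ul] := growing_cv u gu ub.
by rewrite (lim_seq_unique ul).
Qed.

Lemma Un_cv_le_bound u l K : Un_cv u l -> (forall n, u n <= K) -> l <= K.
Proof.
by move=> ul uK; apply: Rle_cv_lim uK ul (Un_cv_const K).
Qed.

Lemma lim_infty_exp_bound (f : R -> R) (l C a : R) :
  0 < a -> (forall b, 0 < b -> Rabs (f b - l) <= C * exp (- (a * b))) ->
  lim_infty f l.
Proof.
move=> a0 fC eps eps0.
have C1 : 0 < Rabs C + 1 by have := Rabs_pos C; lra.
set t := eps / (Rabs C + 1).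
have t0 : 0 < t by apply: Rdiv_lt_0_compat.
exists (Rmax 0 (- ln t / a)) => b /Rmax_Rlt [b0 bM].
have ab : - ln t < a * b.
  by move: (Rmult_lt_compat_l a _ _ a0 bM); rewrite /Rdiv Rmult_comm Rmult_assoc Rinv_l; lra.
have et : exp (- (a * b)) < t by rewrite -(exp_ln t t0); apply: exp_increasing; lra.
have e0 := exp_pos (- (a * b)).
apply: Rle_lt_trans (fC b b0) _.
apply: Rle_lt_trans (Rmult_le_compat_r _ _ _ (Rlt_le _ _ e0) (Rle_abs C)) _.
have -> : eps = t * (Rabs C + 1) by rewrite /t; field; lra.
have := Rabs_pos C; nra.
Qed.

(** * The jump chain and its hitting probabilities *)

Section JumpChain.
Variables (h beta : R) (L : nat).
Hypothesis L_gt0 : (0 < L)%N.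

Local Notation conf := (conf L).
Local Notation jump_avg := (jump_avg h beta).
Local Notation reach := (reach h beta).
Local Notation escape := (escape h beta).

Definition jump_prob (s : conf) (x : site L) (pl : bool) : R :=
  rate h beta s (flip s x pl) / lam h beta s.

Definition origin : site L := (Ordinal L_gt0, Ordinal L_gt0).

Lemma rate_pos (s s' : conf) : 0 < rate h beta s s'.
Proof. exact: exp_pos. Qed.

Lemma lam_pos (s : conf) : 0 < lam h beta s.
Proof.
pose F x := rate h beta s (flip s x true) + rate h beta s (flip s x false).
have F0 x : 0 < F x.
  by have := rate_pos s (flip s x true); have := rate_pos s (flip s x false); rewrite /F; lra.
exact: Rlt_le_trans (F0 origin) (rsum_ge_term _ (fun x => Rlt_le _ _ (F0 x))).
Qed.

Lemma jump_prob_pos (s : conf) x pl : 0 < jump_prob s x pl.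
Proof. exact: Rdiv_lt_0_compat (exp_pos _) (lam_pos s). Qed.

Lemma jump_avgE (s : conf) g :
  jump_avg s g = \rsum_(x : site L)
    (jump_prob s x true * g (flip s x true) + jump_prob s x false * g (flip s x false)).
Proof. by []. Qed.

Lemma jump_avg_le (s : conf) g g' :
  (forall z, g z <= g' z) -> jump_avg s g <= jump_avg s g'.
Proof.
move=> gg'; rewrite !jump_avgE; apply: rsum_le => x _.
have := jump_prob_pos s x true; have := jump_prob_pos s x false.
have := gg' (flip s x true); have := gg' (flip s x false); nra.
Qed.

Lemma jump_avg_plus (s : conf) g g' :
  jump_avg s (fun z => g z + g' z) = jump_avg s g + jump_avg s g'.
Proof. by rewrite !jump_avgE -rsum_plus; apply: eq_bigr => x _; ring. Qed.

Lemma jump_avg_scal (s : conf) c g :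
  jump_avg s (fun z => c * g z) = c * jump_avg s g.
Proof. by rewrite !jump_avgE -rsum_scal; apply: eq_bigr => x _; ring. Qed.

Lemma jump_avg_const (s : conf) c : jump_avg s (fun _ => c) = c.
Proof.
have l0 := lam_pos s.
rewrite jump_avgE; transitivity (c / lam h beta s * lam h beta s); last by field; lra.
rewrite [X in _ = _ * X]/lam -rsum_scal; apply: eq_bigr => x _.
by rewrite /jump_prob; field; lra.
Qed.

Lemma jump_avg_ext (s : conf) g g' : g =1 g' -> jump_avg s g = jump_avg s g'.
Proof. by move=> gg'; rewrite !jump_avgE; apply: eq_bigr => x _; rewrite !gg'. Qed.

Lemma jump_avg_one_minus (s : conf) g :
  jump_avg s (fun z => 1 - g z) = 1 - jump_avg s g.
Proof.
have e : jump_avg s (fun _ => 1) = jump_avg s (fun z => (1 - g z) + g z).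
  by apply: jump_avg_ext => z; ring.
by rewrite -[in RHS](jump_avg_const s 1) e jump_avg_plus; ring.
Qed.

Lemma jump_avg_ge0 (s : conf) g : (forall z, 0 <= g z) -> 0 <= jump_avg s g.
Proof. by move=> g0; rewrite -(jump_avg_const s 0); apply: jump_avg_le. Qed.

Lemma jump_avg_le1 (s : conf) g : (forall z, g z <= 1) -> jump_avg s g <= 1.
Proof. by move=> g1; rewrite -[X in _ <= X](jump_avg_const s 1); apply: jump_avg_le. Qed.

Lemma jump_avg_ge_term (s : conf) g x pl :
  (forall z, 0 <= g z) -> jump_prob s x pl * g (flip s x pl) <= jump_avg s g.
Proof.
move=> g0; have t0 y b : 0 <= jump_prob s y b * g (flip s y b).
  exact: Rmult_le_pos (Rlt_le _ _ (jump_prob_pos s y b)) (g0 _).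
rewrite jump_avgE; apply: Rle_trans (rsum_ge_term x _) => [|y]; last first.
  by have := t0 y true; have := t0 y false; lra.
by case: pl; have := t0 x true; have := t0 x false; lra.
Qed.

Lemma jump_avg_cv (s : conf) (g : nat -> conf -> R) (gl : conf -> R) :
  (forall z, Un_cv (g^~ z) (gl z)) ->
  Un_cv (fun n => jump_avg s (g n)) (jump_avg s gl).
Proof.
move=> ggl; apply: rsum_cv => x.
by apply: CV_plus; apply: CV_mult; rewrite ?(Un_cv_const _) //; apply: Un_cv_const.
Qed.

Lemma reach_in01 (A B : pred conf) n s : 0 <= reach A B n s <= 1.
Proof.
elim: n s => [|n IH] s /=; first lra.
case: (B s); first lra; case: (A s); first lra.
by split; [apply: jump_avg_ge0 | apply: jump_avg_le1] => z; case: (IH z).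
Qed.

Lemma reach_target (A B : pred conf) n s : B s -> reach A B n.+1 s = 1.
Proof. by move=> /= ->. Qed.

Lemma reach_avoid (A B : pred conf) n s : ~~ B s -> A s -> reach A B n.+1 s = 0.
Proof. by move=> /= /negbTE -> ->. Qed.

Lemma reach_step (A B : pred conf) n s : ~~ B s -> ~~ A s ->
  reach A B n.+1 s = jump_avg s (reach A B n).
Proof. by move=> /= /negbTE -> /negbTE ->. Qed.

Lemma reach_succ (A B : pred conf) n s : reach A B n s <= reach A B n.+1 s.
Proof.
elim: n s => [|n IH] s; first by case: (reach_in01 A B 1 s).
case: (boolP (B s)) => [|Bs]; first by move=> Bs; rewrite !reach_target //; lra.
case: (boolP (A s)) => [|As]; first by move=> As; rewrite !reach_avoid //; lra.
by rewrite !reach_step //; apply: jump_avg_le.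
Qed.

Lemma reach_monotone (A B : pred conf) n m s :
  (n <= m)%N -> reach A B n s <= reach A B m s.
Proof.
move=> /subnKC <-; elim: (m - n)%N => [|k IH]; first by rewrite addn0; lra.
by rewrite addnS; apply: Rle_trans IH (reach_succ _ _ _ _).
Qed.

Lemma reach_target_monotone (A B B' : pred conf) n s :
  (forall z, B z -> B' z) -> reach A B n s <= reach A B' n s.
Proof.
move=> BB'; elim: n s => [|n IH] s /=; first lra.
case Bs: (B s); first by rewrite (BB' s Bs); lra.
case: (B' s); first by case: (A s); [lra | apply: jump_avg_le1 => z; case: (reach_in01 A B n z)].
by case: (A s); [lra | apply: jump_avg_le].
Qed.

Definition hitp (A B : pred conf) (s : conf) : R := lim_seq (fun n => reach A B n s).

Lemma hitp_cv (A B : pred conf) s : Un_cv (fun n => reach A B n s) (hitp A B s).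
Proof.
apply: (@lim_seq_growing _ 1) => n; first exact: reach_succ.
by case: (reach_in01 A B n s).
Qed.

Lemma reach_le_hitp (A B : pred conf) n s : reach A B n s <= hitp A B s.
Proof. by apply: (growing_ineq _ _ _ (hitp_cv A B s)) => k; apply: reach_succ. Qed.

Lemma hitp_in01 (A B : pred conf) s : 0 <= hitp A B s <= 1.
Proof.
split; first by apply: Rle_trans (reach_le_hitp A B 0 s); apply: Rle_refl.
by apply: Un_cv_le_bound (hitp_cv A B s) _ => n; case: (reach_in01 A B n s).
Qed.

Lemma hitp_target (A B : pred conf) s : B s -> hitp A B s = 1.
Proof.
move=> Bs; have := reach_le_hitp A B 1 s; rewrite reach_target //.
by have := hitp_in01 A B s; lra.
Qed.

Lemma hitp_avoid (A B : pred conf) s : ~~ B s -> A s -> hitp A B s = 0.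
Proof.
move=> Bs As; have : hitp A B s <= 0.
  by apply: Un_cv_le_bound (hitp_cv A B s) _ => -[|n]; rewrite ?reach_avoid //=; lra.
by have := hitp_in01 A B s; lra.
Qed.

Lemma hitp_harmonic (A B : pred conf) s : ~~ B s -> ~~ A s ->
  hitp A B s = jump_avg s (hitp A B).
Proof.
move=> Bs As; apply: UL_sequence (Un_cv_succ (hitp_cv A B s)) _.
apply: Un_cv_ext (jump_avg_cv s (fun z => hitp_cv A B z)) => n.
by rewrite reach_step.
Qed.

Lemma escape_cv (A B : pred conf) s :
  Un_cv (fun n => jump_avg s (reach A B n)) (escape A B s).
Proof.
apply: (@lim_seq_growing _ 1) => n; first by apply: jump_avg_le => z; apply: reach_succ.
by apply: jump_avg_le1 => z; case: (reach_in01 A B n z).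
Qed.

Lemma jump_avg_reach_le_escape (A B : pred conf) n s :
  jump_avg s (reach A B n) <= escape A B s.
Proof.
apply: (growing_ineq _ _ _ (escape_cv A B s)) => k.
by apply: jump_avg_le => z; apply: reach_succ.
Qed.

End JumpChain.

(** * The Dirichlet form *)

Lemma card_site L : #|{: site L}| = (L * L)%N.
Proof. by rewrite card_prod card_ord. Qed.

Lemma card_conf L : #|{: conf L}| = (3 ^ (L * L))%N.
Proof. by rewrite card_ffun card_site card_ord. Qed.

Lemma flipK L (s : conf L) x b : flip (flip s x b) x (~~ b) = s.
Proof.
apply/ffunP => y; rewrite !ffunE; case: eqP => [->|//].
by rewrite eqxx; case: b; [rewrite ordSK | rewrite ord_predK].
Qed.

Section DirichletForm.
Variables (h beta : R) (L : nat).
Local Notation conf := (conf L).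

Definition conductance (s s' : conf) : R := exp (- beta * Ham h s) * rate h beta s s'.

Lemma conductanceE s s' :
  conductance s s' = exp (- beta * Rmax (Ham h s) (Ham h s')).
Proof.
rewrite /conductance /rate -exp_plus; congr exp.
by rewrite /Rmax; do 2 case: Rle_dec => ?; lra.
Qed.

Lemma conductance_sym s s' : conductance s s' = conductance s' s.
Proof. by rewrite !conductanceE Rmax_comm. Qed.

Lemma conductance_pos s s' : 0 < conductance s s'.
Proof. by rewrite conductanceE; apply: exp_pos. Qed.

Lemma conductance_le s s' : 0 <= beta -> conductance s s' <= exp (- beta * Ham h s).
Proof.
move=> beta0; rewrite conductanceE; apply: exp_monotone.
by have := Rmax_l (Ham h s) (Ham h s'); nra.
Qed.

Definition edge_sum (F : conf -> site L -> bool -> R) : R :=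
  \rsum_(e : conf * (site L * bool)) F e.1 e.2.1 e.2.2.

Lemma edge_sumE F :
  edge_sum F = \rsum_(s : conf) \rsum_(x : site L) (F s x true + F s x false).
Proof.
rewrite /edge_sum -(pair_bigA _ (fun s (e : site L * bool) => F s e.1 e.2)).
apply: eq_bigr => s _; rewrite -(pair_bigA _ (fun x b => F s x b)).
by apply: eq_bigr => x _; rewrite big_bool.
Qed.

Lemma edge_sum_flip F : edge_sum F = edge_sum (fun s x b => F (flip s x b) x (~~ b)).
Proof.
pose rev (e : conf * (site L * bool)) := (flip e.1 e.2.1 e.2.2, (e.2.1, ~~ e.2.2)).
have revK : involutive rev by case=> s [x b]; rewrite /rev /= flipK negbK.
exact: (reindex_inj (inv_inj revK)).
Qed.

Definition flux (g : conf -> R) (s : conf) : R :=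
  \rsum_(x : site L) (conductance s (flip s x true) * (g s - g (flip s x true))
                    + conductance s (flip s x false) * (g s - g (flip s x false))).

Definition dirichlet (g : conf -> R) : R :=
  edge_sum (fun s x b => conductance s (flip s x b) * (g s - g (flip s x b)) ^ 2).

Lemma dirichlet_flux g : dirichlet g = 2 * \rsum_(s : conf) (g s * flux g s).
Proof.
pose T s x b := conductance s (flip s x b) * (g s - g (flip s x b)).
have out : \rsum_(s : conf) (g s * flux g s) = edge_sum (fun s x b => T s x b * g s).
  rewrite edge_sumE; apply: eq_bigr => s _; rewrite /flux -rsum_scal.
  by apply: eq_bigr => x _; rewrite /T; ring.
have into : edge_sum (fun s x b => T s x b * g (flip s x b)) =
            (-1) * edge_sum (fun s x b => T s x b * g s).
  rewrite edge_sum_flip /edge_sum -rsum_scal; apply: eq_bigr => -[s [x b]] _ /=.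
  by rewrite /T flipK conductance_sym; ring.
have D_out_into : dirichlet g = edge_sum (fun s x b => T s x b * g s)
    + (-1) * edge_sum (fun s x b => T s x b * g (flip s x b)).
  by rewrite /dirichlet /edge_sum -rsum_scal -rsum_plus; apply: eq_bigr => e _; rewrite /T; ring.
by rewrite D_out_into into out; ring.
Qed.

Lemma dirichlet_ge_term g s x b :
  conductance s (flip s x b) * (g s - g (flip s x b)) ^ 2 <= dirichlet g.
Proof.
apply: (rsum_ge_term (s, (x, b))) => e.
exact: Rmult_le_pos (Rlt_le _ _ (conductance_pos _ _)) (pow2_ge_0 _).
Qed.

Lemma flux_harmonic g s : (0 < L)%N -> g s = jump_avg h beta s g -> flux g s = 0.
Proof.
move=> L_gt0 gs; have l0 := lam_pos h beta L_gt0 s.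
pose e := exp (- beta * Ham h s).
transitivity (\rsum_(x : site L)
   (e * g s * (rate h beta s (flip s x true) + rate h beta s (flip s x false))
    + (- (e * lam h beta s)) * (jump_prob h beta s x true * g (flip s x true)
                               + jump_prob h beta s x false * g (flip s x false)))).
  by apply: eq_bigr => x _; rewrite /conductance /jump_prob -/e; field; lra.
by rewrite rsum_plus !rsum_scal -jump_avgE -/(lam h beta s) -gs; ring.
Qed.

Lemma flux_le g s : 0 <= beta -> (forall z, 0 <= g z) -> g s = 1 ->
  flux g s <= 2 * INR (L * L) * exp (- beta * Ham h s).
Proof.
move=> beta0 g0 gs1.
apply: (Rle_trans _ (\rsum_(x : site L) (2 * exp (- beta * Ham h s)))); last first.
  by rewrite rsum_const card_site; lra.
apply: rsum_le => x _.
have := conductance_le s (flip s x true) beta0; have := conductance_le s (flip s x false) beta0.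
have := conductance_pos s (flip s x true); have := conductance_pos s (flip s x false).
by have := g0 (flip s x true); have := g0 (flip s x false); rewrite gs1; nra.
Qed.

Lemma dirichlet_equilibrium_le (g : conf -> R) (S : pred conf) (p : conf) (c : R) :
  (0 < L)%N -> 0 <= beta ->
  (forall z, 0 <= g z <= 1) ->
  (forall z, S z -> g z = 1 /\ c < Ham h z) -> g p = 0 ->
  (forall z, ~~ S z -> z != p -> g z = jump_avg h beta z g) ->
  dirichlet g <= 4 * INR (3 ^ (L * L)) * INR (L * L) * exp (- beta * c).
Proof.
move=> L_gt0 beta0 g01 gS gp g_harm.
have bound0 : 0 <= 2 * INR (L * L) * exp (- beta * c).
  by have := pos_INR (L * L); have := exp_pos (- beta * c); nra.
rewrite dirichlet_flux.
have -> : 4 * INR (3 ^ (L * L)) * INR (L * L) * exp (- beta * c) =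
          2 * \rsum_(s : conf) (2 * INR (L * L) * exp (- beta * c)).
  by rewrite rsum_const card_conf; ring.
apply: Rmult_le_compat_l; first lra.
apply: rsum_le => z _; case Sz: (S z).
  have [gz1 cz] := gS z Sz; rewrite gz1 Rmult_1_l.
  apply: Rle_trans (flux_le beta0 (fun w => proj1 (g01 w)) gz1) _.
  apply: Rmult_le_compat_l; first by have := pos_INR (L * L); lra.
  by apply: exp_monotone; nra.
have [->|zp] := eqVneq z p; first by rewrite gp Rmult_0_l.
by rewrite (flux_harmonic L_gt0 (g_harm z (negbT Sz) zp)) Rmult_0_r.
Qed.

End DirichletForm.

(** * Energies along the row-by-row filling of the torus *)

Lemma spin_plus : spin s_plus = 1.
Proof. by rewrite /spin /=; lra. Qed.

Lemma spin_zero : spin s_zero = 0.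
Proof. by rewrite /spin /=; lra. Qed.

Lemma spin_minus : spin s_minus = -1.
Proof. by rewrite /spin /=; lra. Qed.

Lemma Ham_const h L c : Ham h (const_conf L c) = - h * INR (L * L) * spin c.
Proof.
rewrite /Ham /const_conf (eq_bigr (fun _ => 0)) => [|x _]; last by rewrite !ffunE; ring.
rewrite [X in _ - h * X](eq_bigr (fun _ => spin c)) => [|x _]; last by rewrite ffunE.
by rewrite !rsum_const card_site; ring.
Qed.

Lemma Ham_plus h L : Ham h (plus_conf L) = - h * INR (L * L).
Proof. by rewrite Ham_const spin_plus; ring. Qed.

Lemma Ham_minus h L : Ham h (minus_conf L) = h * INR (L * L).
Proof. by rewrite Ham_const spin_minus; ring. Qed.

Lemma rsum_indicator_le1 L (m : nat) :
  \rsum_(a : 'I_L) (if nat_of_ord a == m then 1 else 0) <= 1.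
Proof.
case: (ltnP m L) => [mL|Lm].
  rewrite (bigD1 (Ordinal mL)) //= eqxx big1 => [|a /negbTE]; first lra.
  by rewrite -(inj_eq val_inj) /= => ->.
by rewrite big1 => [|a _]; [lra | case: eqP => // am; move: (ltn_ord a); lia].
Qed.

(* On the cycle ['I_L] the step function [a < t] can only change value at
   [a = t - 1] and at the wrap-around [a = L - 1]. *)
Lemma cycle_threshold_changes L (t : nat) :
  \rsum_(a : 'I_L) (if (a < t)%N == (ordS a < t)%N then 0 else 1) <= 2.
Proof.
pose at_t (a : 'I_L) := if nat_of_ord a == t.-1 then 1 else 0.
pose at_end (a : 'I_L) := if nat_of_ord a == L.-1 then 1 else 0.
apply: (Rle_trans _ (\rsum_(a : 'I_L) (at_t a + at_end a))); last first.
  rewrite rsum_plus; apply: Rle_trans (Rplus_le_compat _ _ _ _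
    (rsum_indicator_le1 L t.-1) (rsum_indicator_le1 L L.-1)) _; lra.
apply: rsum_le => a _; rewrite /at_t /at_end.
have [aend|anend] := eqVneq (nat_of_ord a) L.-1.
  by do ![case: ifP => _] => /=; lra.
have [a_t|a_nt] := eqVneq (nat_of_ord a) t.-1; first by do ![case: ifP => _] => /=; lra.
have succ_a : nat_of_ord (ordS a) = a.+1 by rewrite /= modn_small //; have := ltn_ord a; lia.
have -> : (a < t)%N = (ordS a < t)%N by rewrite succ_a; apply/idP/idP; lia.
by rewrite eqxx; lra.
Qed.

Section RowMajorFilling.
Variable L : nat.
Hypothesis L_gt0 : (0 < L)%N.

Definition row_major (x : site L) : nat := (x.2 * L + x.1)%N.

Definition fill_conf (k : nat) : conf L :=
  [ffun x => if (row_major x < k)%N then s_plus else s_zero].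

Lemma fill_conf0 : fill_conf 0 = zero_conf L.
Proof. by apply/ffunP => x; rewrite !ffunE. Qed.

Lemma fill_conf_full : fill_conf (L * L) = plus_conf L.
Proof.
apply/ffunP => -[a b]; rewrite !ffunE /row_major /=.
have last_row : (b.+1 * L <= L * L)%N by rewrite leq_mul2r ltn_ord orbT.
suff -> : (b * L + a < L * L)%N by [].
by apply: leq_trans last_row; rewrite mulSn addnC ltn_add2r.
Qed.

Lemma ltn_div_square k : (k < L * L)%N -> (k %/ L < L)%N.
Proof. by rewrite ltn_divLR. Qed.

Definition row_major_site (k : nat) (kN : (k < L * L)%N) : site L :=
  (Ordinal (ltn_pmod k L_gt0), Ordinal (ltn_div_square kN)).

Lemma fill_confS k (kN : (k < L * L)%N) :
  fill_conf k.+1 = flip (fill_conf k) (row_major_site kN) true.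
Proof.
have kE := divn_eq k L.
apply/ffunP => -[a b]; rewrite !ffunE /row_major /=; case: eqP => [[-> ->]|ab_ne] /=.
  by rewrite -kE ltnn ltnSn; apply: val_inj.
suff : (b * L + a != k)%N by rewrite ltnS leq_eqVlt => /negbTE ->.
apply: contra_notN ab_ne => /eqP kab; have aL := ltn_ord a.
congr pair; apply: val_inj => /=.
  by rewrite -kab modnMDl modn_small.
by rewrite -kab divnMDl // divn_small // addn0.
Qed.

Lemma fill_confE k x : fill_conf k x = if (row_major x < k)%N then s_plus else s_zero.
Proof. by rewrite ffunE. Qed.

Lemma spin_jump_sq (u v : bool) :
  (spin (if v then s_plus else s_zero) - spin (if u then s_plus else s_zero)) ^ 2 =
  if u == v then 0 else 1.
Proof. by case: u; case: v; rewrite /= ?spin_plus ?spin_zero; lra. Qed.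

Lemma Ham_fill_conf h k : 0 < h -> Ham h (fill_conf k) <= 4 * INR L.
Proof.
move=> h0.
have spin_ge0 : 0 <= \rsum_(x : site L) spin (fill_conf k x).
  by apply: rsum_ge0 => x _; rewrite fill_confE; case: ifP; rewrite ?spin_plus ?spin_zero; lra.
suff : \rsum_(x : site L)
     ((spin (fill_conf k (right_nb x)) - spin (fill_conf k x)) ^ 2 +
      (spin (fill_conf k (up_nb x)) - spin (fill_conf k x)) ^ 2) <= 4 * INR L.
  by rewrite /Ham; nra.
have sites_sum (F : site L -> R) :
    \rsum_(x : site L) F x = \rsum_(a : 'I_L) \rsum_(b : 'I_L) F (a, b).
  by rewrite pair_bigA; apply: eq_bigr => -[].
have row_bound : \rsum_(b : 'I_L) 2 = 2 * INR L by rewrite rsum_const card_ord; ring.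
rewrite rsum_plus (_ : 4 * INR L = 2 * INR L + 2 * INR L); last ring.
apply: Rplus_le_compat; rewrite sites_sum -row_bound; last first.
  apply: rsum_le => a _; apply: Rle_trans (cycle_threshold_changes L ((k - a + L - 1) %/ L)).
  apply: Req_le; apply: eq_bigr => b _; rewrite !fill_confE spin_jump_sq /row_major /=.
  (* column [a] is filled up to row [ceil ((k - a) / L)] *)
  suff E c : (c * L + a < k)%N = (c < (k - a + L - 1) %/ L)%N by rewrite !E.
  by rewrite -[(c < _)%N]/(c.+1 <= _)%N leq_divRL // mulSn; apply/idP/idP; lia.
rewrite exchange_big; apply: rsum_le => b _.
apply: Rle_trans (cycle_threshold_changes L (k - b * L)).
apply: Req_le; apply: eq_bigr => a _; rewrite !fill_confE spin_jump_sq /row_major /=.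
suff E c : (b * L + c < k)%N = (c < k - b * L)%N by rewrite !E.
by apply/idP/idP; lia.
Qed.

End RowMajorFilling.

(** * The climb from 0 above the energy barrier *)

Lemma telescope_lt (psi : nat -> R) (d : R) N :
  (0 < N)%N -> (forall k, (k < N)%N -> psi k - psi k.+1 < d) -> psi 0%N - psi N < INR N * d.
Proof.
case: N => // N _; elim: N => [|N IH] drop; first by have := drop 0%N isT; rewrite /=; lra.
rewrite S_INR Rmult_plus_distr_r.
by have := IH (fun k kN => drop k (ltnW kN)); have := drop N.+1 (ltnSn _); lra.
Qed.

Lemma INR_expn a n : INR (a ^ n) = INR a ^ n.
Proof. by elim: n => [|n IH] //; rewrite expnS mult_INR IH. Qed.

Lemma cube_le_pow8 n : (n ^ 3 <= 8 ^ n)%N.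
Proof.
have -> : (8 ^ n = (2 ^ n) ^ 3)%N by rewrite -expnM mulnC expnM.
by rewrite leq_exp2r // ltnW // ltn_expl.
Qed.

Lemma pow_le_base x n : 0 <= x <= 1 -> (0 < n)%N -> x ^ n <= x.
Proof.
case: n => // n [x0 x1] _; elim: n => [|n IH] /=; first lra.
by have := pow_le x n x0; simpl in IH; nra.
Qed.

Section EquilibriumPotential.
Variables (h beta : R) (L : nat).
Hypotheses (L_gt0 : (0 < L)%N) (h_gt0 : 0 < h) (beta_ge0 : 0 <= beta).
Local Notation N := (INR (L * L)).

Lemma N_gt0 : 0 < N.
Proof. by apply: lt_0_INR; apply/ltP; rewrite muln_gt0 L_gt0. Qed.

Lemma dirichlet_ge_fill_path (g : conf L -> R) :
  g (plus_conf L) = 0 -> 0 <= g (zero_conf L) ->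
  g (zero_conf L) ^ 2 <= N ^ 2 * exp (beta * (4 * INR L)) * dirichlet h beta g.
Proof.
move=> g_plus g_zero0; have N0 := N_gt0.
pose psi k := g (fill_conf L k).
pose d := g (zero_conf L) / N.
have [k kN drop] : exists2 k, (k < L * L)%N & d <= psi k - psi k.+1.
  apply: NNPP => no_drop.
  have all_small j : (j < L * L)%N -> psi j - psi j.+1 < d.
    by move=> jN; apply: Rnot_le_lt => dj; apply: no_drop; exists j.
  have := telescope_lt (ltac:(by rewrite muln_gt0 L_gt0) : (0 < L * L)%N) all_small.
  rewrite /psi fill_conf0 fill_conf_full g_plus /d.
  have -> : N * (g (zero_conf L) / N) = g (zero_conf L) by field; lra.
  lra.
have cond_path :
    exp (- beta * (4 * INR L)) <= conductance h beta (fill_conf L k) (fill_conf L k.+1).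
  rewrite conductanceE; apply: exp_monotone.
  have := Ham_fill_conf L_gt0 k h_gt0; have := Ham_fill_conf L_gt0 k.+1 h_gt0.
  by rewrite /Rmax; case: Rle_dec => _; nra.
have D_edge := dirichlet_ge_term h beta g (fill_conf L k) (row_major_site L_gt0 kN) true.
rewrite -fill_confS in D_edge.
have d0 : 0 <= d by apply: Rmult_le_pos (Rlt_le _ _ (Rinv_0_lt_compat _ N0)).
have e_inv : exp (beta * (4 * INR L)) * exp (- beta * (4 * INR L)) = 1.
  by rewrite -exp_plus -exp_0; congr exp; ring.
have ep := exp_pos (beta * (4 * INR L)); have em := exp_pos (- beta * (4 * INR L)).
have d_sq : d ^ 2 <= (psi k - psi k.+1) ^ 2 by apply: pow_incr; lra.
have : exp (- beta * (4 * INR L)) * d ^ 2 <= dirichlet h beta g.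
  apply: Rle_trans D_edge; apply: Rmult_le_compat => //; [lra | nra].
move=> /(Rmult_le_compat_l _ _ _ (Rlt_le _ _ ep)); rewrite -Rmult_assoc e_inv Rmult_1_l => dD.
have -> : g (zero_conf L) = N * d by rewrite /d; field; lra.
rewrite Rmult_assoc (_ : (N * d) ^ 2 = N ^ 2 * d ^ 2); last ring.
by apply: Rmult_le_compat_l dD; apply: pow_le; lra.
Qed.

Definition energy_above (c : R) : pred (conf L) :=
  fun s => if Rlt_dec c (Ham h s) then true else false.

Lemma energy_aboveP c s : energy_above c s <-> c < Ham h s.
Proof. by rewrite /energy_above; case: Rlt_dec. Qed.

Lemma hitp_energy_above_sq_le c : - h * N <= c ->
  hitp h beta (pred1 (plus_conf L)) (energy_above c) (zero_conf L) ^ 2 <=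
  4 * N ^ 3 * INR (3 ^ (L * L)) * exp (- beta * (c - 4 * INR L)).
Proof.
move=> c_low; set g := hitp h beta _ _.
have plus_low : ~~ energy_above c (plus_conf L).
  by apply/negP => /energy_aboveP; rewrite Ham_plus; lra.
have g_plus : g (plus_conf L) = 0 by apply: hitp_avoid => //=; rewrite eqxx.
have D_le := dirichlet_equilibrium_le (S := energy_above c) L_gt0 beta_ge0
  (hitp_in01 h beta L_gt0 _ _)
  (fun z Sz => conj (hitp_target h beta L_gt0 _ Sz) (proj1 (energy_aboveP c z) Sz))
  g_plus (fun z Sz zp => hitp_harmonic h beta L_gt0 Sz zp).
apply: Rle_trans (dirichlet_ge_fill_path g_plus (proj1 (hitp_in01 h beta L_gt0 _ _ _))) _.
have e_split : exp (- beta * (c - 4 * INR L)) = exp (beta * (4 * INR L)) * exp (- beta * c).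
  by rewrite -exp_plus; congr exp; ring.
have := pos_INR (L * L); have := exp_pos (beta * (4 * INR L)) => N0 e0.
rewrite e_split; apply: Rle_trans (Rmult_le_compat_l _ _ _ _ D_le) _; first nra.
by apply: Req_le; ring.
Qed.

Lemma hitp_energy_above_le delta :
  0 < delta -> 4 * INR L + delta * N <= h * N ->
  hitp h beta (pred1 (plus_conf L)) (energy_above ((h * N + 4 * INR L) / 2)) (zero_conf L)
    <= 10 * exp (- (delta / 4 * beta)).
Proof.
move=> delta0 gap; set phi := hitp h beta _ _ _.
have [phi0 phi1] : 0 <= phi <= 1 by apply: hitp_in01.
set y := exp (- (delta / 4 * beta)); set x := y ^ 2.
have x_exp : x = exp (- (beta * delta / 2)).
  by rewrite /x /y -exp_INR_mult; congr exp; rewrite /=; field.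
suff : phi ^ 2 <= 96 * x by have := exp_pos (- (delta / 4 * beta)); rewrite -/y /x; nra.
(* [(24 x)^N <= 24 x] needs [24 x <= 1]; otherwise the bound is trivial since [phi <= 1]. *)
have [x_small|] := Rle_dec (24 * x) 1; last by nra.
have N0 := N_gt0.
have L0 : 0 <= INR L by apply: pos_INR.
apply: Rle_trans (hitp_energy_above_sq_le _) _; first nra.
have Lpow : exp (- beta * ((h * N + 4 * INR L) / 2 - 4 * INR L)) <= x ^ (L * L).
  rewrite x_exp -exp_INR_mult; apply: exp_monotone; nra.
have cube : N ^ 3 <= 8 ^ (L * L).
  have e8 : INR 8 = 8 by rewrite /=; lra.
  by have := le_INR _ _ (leP (cube_le_pow8 (L * L))); rewrite !INR_expn e8.
have x0 : 0 <= x by rewrite /x; apply: pow2_ge_0.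
have pow24 := pow_le_base (conj (ltac:(lra) : 0 <= 24 * x) x_small)
                 (ltac:(by rewrite muln_gt0 L_gt0) : (0 < L * L)%N).
have e24 : 24 * x = 8 * (3 * x) by ring.
rewrite e24 (Rpow_mult_distr 8) (Rpow_mult_distr 3) in pow24.
have p3 := pow_le 3 (L * L) ltac:(lra).
have N3 : 0 <= N ^ 3 by apply: pow_le; lra.
have e0 := exp_pos (- beta * ((h * N + 4 * INR L) / 2 - 4 * INR L)).
rewrite INR_expn (_ : INR 3 = 3); last by rewrite /=; lra.
have : N ^ 3 * 3 ^ (L * L) * exp (- beta * ((h * N + 4 * INR L) / 2 - 4 * INR L))
       <= 8 ^ (L * L) * 3 ^ (L * L) * x ^ (L * L).
  apply: Rmult_le_compat => //; [nra | lra | exact: Rmult_le_compat_r].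
lra.
Qed.

End EquilibriumPotential.

(** * Renewal at 0 *)

Section Renewal.
Variables (h beta : R) (L : nat).
Hypothesis L_gt0 : (0 < L)%N.
Local Notation conf := (conf L).
Local Notation reach := (reach h beta).
Local Notation escape := (escape h beta).

Definition plus_deficit (s : conf) : nat := \sum_(x : site L) (2 - s x).

Lemma plus_deficit_flip (s : conf) x : (s x < 2)%N ->
  (0 < plus_deficit s)%N /\ plus_deficit (flip s x true) = (plus_deficit s).-1.
Proof.
move=> sx2; have rest : (\sum_(y | y != x) (2 - flip s x true y) = \sum_(y | y != x) (2 - s y))%N.
  by apply: eq_bigr => y /negbTE yx; rewrite ffunE yx.
rewrite /plus_deficit (bigD1 x (F := fun y => 2 - s y)%N) //.
rewrite (bigD1 x (F := fun y => 2 - flip s x true y)%N) //= rest ffunE eqxx /=.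
by rewrite modn_small; lia.
Qed.

Lemma exists_below_plus (s : conf) : s != plus_conf L -> exists x, (s x < 2)%N.
Proof.
move=> s_plus; apply/existsP; apply: contra_neqT s_plus => /existsPn below2.
apply/ffunP => x; rewrite ffunE; apply: ord_inj => /=.
by move: (below2 x); case: (s x) => v v3 /=; lia.
Qed.

Lemma plus_deficit_le (s : conf) : (plus_deficit s <= 2 * (L * L))%N.
Proof.
have : (plus_deficit s <= \sum_(x : site L) 2)%N by apply: leq_sum => x _; apply: leq_subr.
by rewrite sum_nat_const card_site mulnC.
Qed.

Lemma reach_pos (A B : pred conf) :
  (forall s, A s -> s = minus_conf L) -> B (plus_conf L) ->
  forall n s, s != minus_conf L -> (plus_deficit s < n)%N -> 0 < reach A B n s.
Proof.
move=> A_minus B_plus; elim=> [|n IH] s // s_minus sn.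
case Bs: (B s); first by rewrite reach_target //; lra.
have As : ~~ A s by apply: contraNN s_minus => /A_minus ->.
rewrite reach_step ?Bs //.
have [x sx] : exists x, (s x < 2)%N.
  by apply: exists_below_plus; apply: contraFneq _ Bs => ->.
have [deficit0 deficit_flip] := plus_deficit_flip sx.
have flip_minus : flip s x true != minus_conf L.
  apply/eqP => /(congr1 (fun f : conf => nat_of_ord (f x))).
  by rewrite !ffunE eqxx /= modn_small //; lia.
apply: Rlt_le_trans _ (jump_avg_ge_term h beta L_gt0 s x true
                         (fun z => proj1 (reach_in01 h beta L_gt0 A B n z))).
apply: Rmult_lt_0_compat (jump_prob_pos h beta L_gt0 s x true) (IH _ flip_minus _).
by rewrite deficit_flip; lia.
Qed.

Lemma reach_restart (B : pred conf) (rho : R) N k s :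
  0 <= rho -> (forall z, 1 - reach xpred0 B N z <= rho) ->
  1 - reach xpred0 B (k + N) s <= (1 - reach xpred0 B k s) * rho.
Proof.
move=> rho0 N_rho; elim: k s => [|k IH] s; first by rewrite add0n /=; have := N_rho s; lra.
case: (boolP (B s)) => Bs; first by rewrite addSn !reach_target //; lra.
rewrite addSn !reach_step // -!(jump_avg_one_minus h beta L_gt0).
apply: Rle_trans (jump_avg_le h beta L_gt0 s IH) _; apply: Req_le.
by rewrite Rmult_comm -jump_avg_scal; apply: jump_avg_ext => z; ring.
Qed.

Lemma reach_geometric (B : pred conf) (rho : R) N k s :
  0 <= rho -> (forall z, 1 - reach xpred0 B N z <= rho) ->
  1 - reach xpred0 B (k * N) s <= rho ^ k.
Proof.
move=> rho0 N_rho; elim: k s => [|k IH] s; first by rewrite mul0n /=; lra.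
rewrite mulSn addnC; apply: Rle_trans (reach_restart (k * N) s rho0 N_rho) _.
by rewrite /= Rmult_comm; apply: Rmult_le_compat_l.
Qed.

Definition minus_or_plus : pred conf := fun s => (s == minus_conf L) || (s == plus_conf L).

(* Every state other than -1 reaches +1 by [plus_deficit <= 2 L^2] upward
   flips, so within [N] steps {-1,+1} is hit with probability at least [m > 0]. *)
Lemma reach_minus_or_plus_cv s eps : 0 < eps ->
  exists M, 1 - reach xpred0 minus_or_plus M s < eps.
Proof.
move=> eps0; set y := reach xpred0 minus_or_plus; set N := (2 * (L * L)).+1.
have yN_pos z : 0 < y N z.
  have [->|z_minus] := eqVneq z (minus_conf L).
    by rewrite /y reach_target /minus_or_plus ?eqxx //; lra.
  apply: reach_pos z_minus _ => //; first by rewrite /minus_or_plus eqxx orbT.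
  by have := plus_deficit_le z; rewrite /N; lia.
set m := \big[Rmin/1]_(z <- index_enum conf) y N z.
have m0 : 0 < m by apply: big_ind => [|a b|z _]; [lra | exact: Rmin_glb_lt | exact: yN_pos].
have m_le z : m <= y N z by apply: big_Rmin_le; rewrite mem_index_enum.
have [rho0 rho1] : 0 <= 1 - m < 1.
  have [_ y1] : 0 <= y N s <= 1 by apply: reach_in01.
  by have := m_le s; lra.
have [K rhoK] := pow_lt_1_zero (1 - m) ltac:(rewrite Rabs_pos_eq //) eps eps0.
have N_rho z : 1 - y N z <= 1 - m by have := m_le z; lra.
exists (K * N)%N; apply: Rle_lt_trans (reach_geometric K s rho0 N_rho) _.
by have := rhoK K (le_n K); rewrite Rabs_pos_eq //; apply: pow_le.
Qed.

Lemma reach_via (A B : pred conf) (z : conf) M n s :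
  reach A (fun w => (w == z) || B w) n s <=
  reach A B (n + M) s + (1 - reach A B M z) * reach A (fun w => (w == z) || B w) n s.
Proof.
set B' := fun w => _ || _.
have [fz0 fz1] := reach_in01 h beta L_gt0 A B M z.
elim: n s => [|n IH] s.
  by rewrite /= Rmult_0_r Rplus_0_r; case: (reach_in01 h beta L_gt0 A B M s).
rewrite addSn; case B's: (B' s).
  rewrite reach_target //; case/orP: B's => [/eqP ->|Bs].
    have le_M : (M <= (n + M).+1)%N by lia.
    by have := reach_monotone h beta L_gt0 A B z le_M; lra.
  by rewrite reach_target //; lra.
have Bs : ~~ B s by apply: contraFN B's => Bs; rewrite /B' Bs orbT.
case: (boolP (A s)) => As.
  by rewrite !reach_avoid ?B's // Rmult_0_r Rplus_0_r; lra.
rewrite !reach_step ?B's //.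
apply: Rle_trans (jump_avg_le h beta L_gt0 s IH) _.
by rewrite jump_avg_plus jump_avg_scal; lra.
Qed.

Lemma reach_minus_or_plus_le (S : pred conf) n s :
  S (minus_conf L) -> ~~ S (plus_conf L) ->
  reach xpred0 minus_or_plus n s <=
  reach (pred1 (minus_conf L)) (pred1 (plus_conf L)) n s + reach (pred1 (plus_conf L)) S n s.
Proof.
move=> S_minus S_plus.
have y1 m w : reach xpred0 minus_or_plus m w <= 1 by apply: (proj2 (reach_in01 _ _ _ _ _ _ _)).
have f0 m w : 0 <= reach (pred1 (minus_conf L)) (pred1 (plus_conf L)) m w.
  exact: (proj1 (reach_in01 _ _ _ _ _ _ _)).
have psi0 m w : 0 <= reach (pred1 (plus_conf L)) S m w.
  exact: (proj1 (reach_in01 _ _ _ _ _ _ _)).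
elim: n s => [|n IH] s; first by rewrite /=; lra.
have [->|s_minus] := eqVneq s (minus_conf L).
  rewrite [reach _ S _ _]reach_target //.
  by have := y1 n.+1 (minus_conf L); have := f0 n.+1 (minus_conf L); lra.
have [->|s_plus] := eqVneq s (plus_conf L).
  rewrite [reach _ (pred1 _) _ _]reach_target; last by rewrite /= eqxx.
  by have := y1 n.+1 (plus_conf L); have := psi0 n.+1 (plus_conf L); lra.
have not_pm : ~~ minus_or_plus s by rewrite /minus_or_plus negb_or s_minus s_plus.
case: (boolP (S s)) => Ss.
  by rewrite [reach _ S _ _]reach_target //; have := y1 n.+1 s; have := f0 n.+1 s; lra.
rewrite !reach_step //; apply: Rle_trans (jump_avg_le h beta L_gt0 s IH) _.
by rewrite jump_avg_plus; lra.
Qed.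

Lemma escape_in01 (A B : pred conf) s : 0 <= escape A B s <= 1.
Proof.
split.
  apply: Rle_trans (jump_avg_reach_le_escape h beta L_gt0 A B 0 s).
  by apply: jump_avg_ge0 => // z; apply: Rle_refl.
apply: Un_cv_le_bound (escape_cv h beta L_gt0 A B s) _ => n.
by apply: jump_avg_le1 => // z; case: (reach_in01 h beta L_gt0 A B n z).
Qed.

Lemma escape_target_monotone (A B B' : pred conf) s :
  (forall z, B z -> B' z) -> escape A B s <= escape A B' s.
Proof.
move=> BB'; apply: (Rle_cv_lim _ (escape_cv h beta L_gt0 A B s) (escape_cv h beta L_gt0 A B' s)).
by move=> n; apply: jump_avg_le => // z; apply: reach_target_monotone.
Qed.

Lemma escape_via (A B : pred conf) z M s :
  escape A (fun w => (w == z) || B w) s <=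
  escape A B s + (1 - reach A B M z) * escape A (fun w => (w == z) || B w) s.
Proof.
set B' := fun w => _ || _.
have [fz0 fz1] := reach_in01 h beta L_gt0 A B M z.
apply: Un_cv_le_bound (escape_cv h beta L_gt0 A B' s) _ => n.
apply: Rle_trans (jump_avg_le h beta L_gt0 s (reach_via A B z M n)) _.
rewrite jump_avg_plus jump_avg_scal.
apply: Rplus_le_compat; first exact: jump_avg_reach_le_escape.
by apply: Rmult_le_compat_l; [lra | exact: jump_avg_reach_le_escape].
Qed.

(* A path reaching {0,+1} before -1 either ends at +1 or restarts from 0; from
   0 it reaches +1 before -1 unless it first enters [S], which contains -1. *)
Lemma escape_plus_ge (S : pred conf) s :
  S (minus_conf L) -> ~~ S (plus_conf L) ->
  (1 - hitp h beta (pred1 (plus_conf L)) S (zero_conf L)) *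
    escape (pred1 (minus_conf L)) (fun w => (w == zero_conf L) || (w == plus_conf L)) s
  <= escape (pred1 (minus_conf L)) (pred1 (plus_conf L)) s.
Proof.
move=> S_minus S_plus.
set phi := hitp _ _ _ _ _; set e1 := escape _ (pred1 _) s; set e2 := escape _ _ s.
have [e2_0 e2_1] : 0 <= e2 <= 1 by apply: escape_in01.
apply: le_epsilon => eps eps0.
have [M yM] := reach_minus_or_plus_cv (zero_conf L) eps0.
have via : e2 <= e1 + (1 - reach (pred1 (minus_conf L)) (pred1 (plus_conf L)) M (zero_conf L)) * e2.
  exact: escape_via.
have hit_pm := reach_minus_or_plus_le M (zero_conf L) S_minus S_plus.
have psi_phi : reach (pred1 (plus_conf L)) S M (zero_conf L) <= phi by apply: reach_le_hitp.
have f1 : reach (pred1 (minus_conf L)) (pred1 (plus_conf L)) M (zero_conf L) <= 1.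
  exact: (proj2 (reach_in01 _ _ _ _ _ _ _)).
nra.
Qed.

Lemma escape_minus_pos (B : pred conf) :
  B (plus_conf L) -> 0 < escape (pred1 (minus_conf L)) B (minus_conf L).
Proof.
move=> B_plus; set o := origin L_gt0; set s := flip (minus_conf L) o true.
have s_minus : s != minus_conf L.
  by apply/eqP => /(congr1 (fun f : conf => nat_of_ord (f o))); rewrite !ffunE eqxx.
have reach_s := reach_pos (A := pred1 (minus_conf L)) (fun w => @eqP _ w _) B_plus
                  s_minus (ltnSn _).
apply: Rlt_le_trans (jump_avg_reach_le_escape h beta L_gt0 _ B (plus_deficit s).+1 _).
apply: Rlt_le_trans (jump_avg_ge_term h beta L_gt0 (minus_conf L) o true
                       (fun z => proj1 (reach_in01 h beta L_gt0 _ B _ z))).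
exact: Rmult_lt_0_compat (jump_prob_pos h beta L_gt0 _ o true) reach_s.
Qed.

End Renewal.

(** * Capacities *)

Lemma escape_minus_plus_close h beta L delta :
  (0 < L)%N -> 0 < h -> 0 < beta -> 0 < delta ->
  4 * INR L + delta * INR (L * L) <= h * INR (L * L) ->
  (1 - 10 * exp (- (delta / 4 * beta))) *
    escape h beta (pred1 (minus_conf L))
      (fun s => (s == zero_conf L) || (s == plus_conf L)) (minus_conf L)
  <= escape h beta (pred1 (minus_conf L)) (pred1 (plus_conf L)) (minus_conf L).
Proof.
move=> L_gt0 h0 beta0 delta0 gap.
set c := (h * INR (L * L) + 4 * INR L) / 2.
have N0 := N_gt0 L_gt0; have L0 := pos_INR L.
have S_minus : @energy_above h L c (minus_conf L).
  by apply/energy_aboveP; rewrite Ham_minus /c; nra.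
have S_plus : ~~ @energy_above h L c (plus_conf L).
  by apply/negP => /energy_aboveP; rewrite Ham_plus /c; nra.
apply: Rle_trans (escape_plus_ge h beta L_gt0 (minus_conf L) S_minus S_plus).
apply: Rmult_le_compat_r; first exact: (proj1 (escape_in01 _ _ _ _ _ _)).
by have := hitp_energy_above_le L_gt0 h0 (Rlt_le _ _ beta0) delta0 gap; rewrite -/c; lra.
Qed.

Lemma mu_pos h beta L (s : conf L) : 0 < mu h beta s.
Proof.
apply: Rdiv_lt_0_compat (exp_pos _) _.
exact: Rlt_le_trans (exp_pos _) (rsum_ge_term s (fun s => Rlt_le _ _ (exp_pos _))).
Qed.

Lemma cap_from_singleton h beta L (a : conf L) (B : pred (conf L)) :
  cap h beta (pred1 a) B = mu h beta a * lam h beta a * escape h beta (pred1 a) B a.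
Proof. by rewrite /cap (big_pred1 a). Qed.

Lemma cap_ratio_close h beta L delta :
  (0 < L)%N -> 0 < h -> 0 < beta -> 0 < delta ->
  4 * INR L + delta * INR (L * L) <= h * INR (L * L) ->
  Rabs (cap h beta (pred1 (minus_conf L)) (pred1 (plus_conf L))
        / cap h beta (pred1 (minus_conf L))
                     (fun s => (s == zero_conf L) || (s == plus_conf L)) - 1)
  <= 10 * exp (- (delta / 4 * beta)).
Proof.
move=> L_gt0 h0 beta0 delta0 gap.
have close := escape_minus_plus_close L_gt0 h0 beta0 delta0 gap.
have e_le := escape_target_monotone h beta L_gt0 (pred1 (minus_conf L)) (minus_conf L)
  (B := pred1 (plus_conf L)) (B' := fun s => (s == zero_conf L) || (s == plus_conf L))
  (fun s s_plus => introT orP (or_intror s_plus)).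
have e_pos := escape_minus_pos h beta L_gt0
  (B := fun s => (s == zero_conf L) || (s == plus_conf L)) (introT orP (or_intror (eqxx _))).
have mu0 := mu_pos h beta (minus_conf L); have lam0 := lam_pos h beta L_gt0 (minus_conf L).
rewrite !cap_from_singleton; move: close e_le e_pos.
set e1 := escape _ _ _ (pred1 _) _; set e2 := escape _ _ _ _ _; move=> close e_le e_pos.
have -> : mu h beta (minus_conf L) * lam h beta (minus_conf L) * e1 /
          (mu h beta (minus_conf L) * lam h beta (minus_conf L) * e2) - 1 = - ((e2 - e1) * / e2).
  by field; repeat split; lra.
rewrite Rabs_Ropp Rabs_pos_eq; last by apply: Rmult_le_pos; [lra | apply/Rlt_le/Rinv_0_lt_compat].
apply: (Rmult_le_reg_r e2) => //.
by rewrite Rmult_assoc Rinv_l; lra.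
Qed.

Lemma energy_margin h n0 : 0 < h < 1 -> INR n0 <= 2 / h < INR n0 + 1 ->
  exists2 delta, 0 < delta & forall L, (n0 * (n0 + 1) + 2 <= L)%N ->
    4 * INR L + delta * INR (L * L) <= h * INR (L * L).
Proof.
move=> [h0 h1] [n0_le n0_gt].
set K := INR (n0 * (n0 + 1) + 2).
have K_E : K = INR n0 * (INR n0 + 1) + 2 by rewrite /K !plus_INR mult_INR plus_INR.
have h_n0 : 2 < h * (INR n0 + 1).
  move: n0_gt; rewrite /Rdiv => /(Rmult_lt_compat_l h _ _ h0).
  by rewrite -Rmult_assoc (Rmult_comm h 2) Rmult_assoc Rinv_r; lra.
have n0_ge2 : 2 <= INR n0.
  have : 2 < 2 / h by apply: (Rmult_lt_reg_r h) => //; rewrite /Rdiv Rmult_assoc Rinv_l; lra.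
  have [n0_small|] := ltnP n0 2; last by move/leP/le_INR; rewrite /=; lra.
  by have := le_INR n0 1 (leP (n0_small : (n0 <= 1)%N)); rewrite /=; lra.
have hK : 4 < h * K by rewrite K_E; nra.
have K0 : 0 < K by nra.
have K_inv : K * / K = 1 by apply: Rinv_r; lra.
exists (h - 4 / K) => [|L L_ge]; first by rewrite /Rdiv; nra.
have KL : K <= INR L by apply/le_INR/leP.
rewrite mult_INR /Rdiv; nra.
Qed.

Unset Implicit Arguments. Set Strict Implicit.

Theorem lemma7p4 (h : R) (n0 : nat) (L : R -> nat) :
  0 < h < 1 ->
  INR n0 <= 2 / h < INR n0 + 1 ->
  (forall k : nat, 2 / h <> INR k) ->
  (forall beta, 0 < beta -> (n0 * (n0 + 1) + 2 <= L beta)%N) ->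
  lim_infty (fun beta => sqrt (INR (L beta * L beta)%N) *
              (exp (- (((INR n0 + 1) * h - 2) * beta)) + exp (- (h * beta)))) 0 ->
  lim_infty (fun beta => (INR (L beta * L beta)%N) ^ 2 * exp (- ((2 - h) * beta))) 0 ->
  lim_infty (fun beta =>
      cap h beta (pred1 (minus_conf (L beta))) (pred1 (plus_conf (L beta)))
      / cap h beta (pred1 (minus_conf (L beta)))
                   (fun s => (s == zero_conf (L beta)) || (s == plus_conf (L beta))))
    1.
Proof.
move=> h_bounds n0_bounds _ L_large _ _.
have [delta delta0 gap] := energy_margin h_bounds n0_bounds.
apply: (lim_infty_exp_bound (C := 10) (a := delta / 4)); first lra.
move=> beta beta0; have L_ge := L_large beta beta0.
apply: cap_ratio_close => //; [lia | lra | exact: gap].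
Qed.
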